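(* Let $S$ be a dense subsemigroup of $((0,\infty),+)$ and let $\mathcal{K}=\{A\subseteq S: S\setminus A\text{ is not a } J\text{-set near zero}\}$. Then $\mathcal{K}$ is a filter on $S$, $J_0(S)=\overline{\mathcal{K}}$, and $J_0(S)$ is a compact subsemigroup of $\beta S$.
   Context: ''Dense'' means dense in the usual topology of $(0,\infty)$. $\beta S$ is the Stone–Čech compactification of the discrete set $S$ (ultrafilters on $S$), with $+$ extended so that $(\beta S,+)$ is a compact right topological semigroup: $A\in p+q$ iff $\{x\in S:-x+A\in q\}\in p$. $O^{+}(S)=\{p\in\beta S: S\cap(0,\epsilon)\in p\text{ for every }\epsilon>0\}$. For a filter $\mathcal{K}$ on $S$, $\overline{\mathcal{K}}=\{p\in\beta S:\mathcal{K}\subseteq p\}$. Let $\tau_0$ be the set of sequences $f:\mathbb{N}\to S$ with $f(n)\to0$. A set $A\subseteq S$ is a $J$-set near zero iff for every finite nonempty $F\subseteq\tau_0$ and every $\delta>0$ there exist $a\in S\cap(0,\delta)$ and a finite nonempty $H\subseteq\mathbb{N}$ such that $a+\sum_{t\in H}f(t)\in A$ for every $f\in F$. $J_0(S)=\{p\in O^{+}(S): \text{every } A\in p \text{ is a } J\text{-set near zero}\}$. *)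

From Stdlib Require Import Reals List.
Open Scope R_scope.

(* Subsets of R are predicates R -> Prop; subsets of S are predicates contained in S. *)
Definition subsetR (A B : R -> Prop) : Prop := forall x, A x -> B x.

Definition dense_subsemigroup (S : R -> Prop) : Prop :=
  (forall x, S x -> 0 < x) /\
  (forall x y, S x -> S y -> S (x + y)) /\
  (forall a b, 0 < a -> a < b -> exists s, S s /\ a < s /\ s < b).

(* Points of beta S: ultrafilters on S, i.e. families p of subsets of S. *)
Definition ultrafilter (S : R -> Prop) (p : (R -> Prop) -> Prop) : Prop :=
  (forall A, p A -> subsetR A S) /\
  p S /\
  ~ p (fun _ => False) /\
  (forall A B, p A -> p B -> p (fun x => A x /\ B x)) /\
  (forall A B, p A -> subsetR A B -> subsetR B S -> p B) /\
  (forall A, subsetR A S -> p A \/ p (fun x => S x /\ ~ A x)).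

Definition filter_on (S : R -> Prop) (K : (R -> Prop) -> Prop) : Prop :=
  (forall A, K A -> subsetR A S) /\
  K S /\
  ~ K (fun _ => False) /\
  (forall A B, K A -> K B -> K (fun x => A x /\ B x)) /\
  (forall A B, K A -> subsetR A B -> subsetR B S -> K B).

(* The extended operation on beta S:  A in p+q  iff  {x in S : -x+A in q} in p,
   where -x+A = {y in S : x+y in A}. *)
Definition ult_add (S : R -> Prop) (p q : (R -> Prop) -> Prop) : (R -> Prop) -> Prop :=
  fun A => subsetR A S /\
    p (fun x => S x /\ q (fun y => S y /\ A (x + y))).

Definition Oplus (S : R -> Prop) (p : (R -> Prop) -> Prop) : Prop :=
  ultrafilter S p /\ forall eps, 0 < eps -> p (fun x => S x /\ x < eps).

(* tau_0: sequences in S converging to 0 (indexed by nat; the shift from N={1,2,..} is immaterial). *)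
Definition tau0 (S : R -> Prop) (f : nat -> R) : Prop :=
  (forall n, S (f n)) /\ Un_cv f 0.

(* sum_{t in H} f(t) for a finite set H given as a duplicate-free list *)
Definition sum_over (f : nat -> R) (H : list nat) : R :=
  fold_right (fun t acc => f t + acc) 0 H.

Definition Jset_near_zero (S : R -> Prop) (A : R -> Prop) : Prop :=
  forall F : list (nat -> R), F <> nil -> (forall f, In f F -> tau0 S f) ->
  forall delta, 0 < delta ->
  exists a (H : list nat),
    S a /\ a < delta /\ H <> nil /\ NoDup H /\
    forall f, In f F -> A (a + sum_over f H).

Definition J0 (S : R -> Prop) (p : (R -> Prop) -> Prop) : Prop :=
  Oplus S p /\ forall A, p A -> Jset_near_zero S A.

Definition Kfam (S : R -> Prop) : (R -> Prop) -> Prop :=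
  fun A => subsetR A S /\ ~ Jset_near_zero S (fun x => S x /\ ~ A x).

(* closure  K-bar = {p in beta S : K subset p} *)
Definition Kbar (S : R -> Prop) (K : (R -> Prop) -> Prop) (p : (R -> Prop) -> Prop) : Prop :=
  ultrafilter S p /\ forall A, K A -> p A.

Definition bS_open (S : R -> Prop) (U : ((R -> Prop) -> Prop) -> Prop) : Prop :=
  forall p, U p -> exists A, p A /\ forall q, ultrafilter S q -> q A -> U q.

Definition bS_compact (S : R -> Prop) (X : ((R -> Prop) -> Prop) -> Prop) : Prop :=
  forall (I : Type) (U : I -> ((R -> Prop) -> Prop) -> Prop),
    (forall i, bS_open S (U i)) ->
    (forall p, X p -> exists i, U i p) ->
    exists l : list I, forall p, X p -> exists i, In i l /\ U i p.

Definition bS_subsemigroup (S : R -> Prop) (X : ((R -> Prop) -> Prop) -> Prop) : Prop :=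
  (forall p, X p -> ultrafilter S p) /\
  (exists p, X p) /\
  (forall p q, X p -> X q -> X (ult_add S p q)).

(* The heart of the matter is that J-sets near zero are partition regular.  Given a finite
   family F of null sequences, read every word over F along far-out disjoint blocks of a fixed
   length N: this gives finitely many new null sequences.  If A \/ B is a J-set near zero, it
   contains a configuration for all of them, and colouring the words by membership in A, the
   Hales-Jewett theorem yields a combinatorial line of one colour; substituting the letters of
   the line collapses it to a configuration a + sum_{t in H} f(t) lying in A for every f in F
   (or in B for every f).  Hence K is a filter; since the sets S /\ (0, eps) belong to K,
   J_0(S) is exactly the closure of K, which is compact as the closure of any filter is.
   Finally J_0(S) is closed under + because a configuration for p followed, at larger
   indices, by one for q inside the q-large set of shifts is a configuration for p + q. *)

From Stdlib Require Import Reals Lra Lia List Classical ClassicalEpsilon Permutation.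
From mathcomp Require classical_sets filter.
Import ListNotations.
Local Open Scope R_scope.

(** * The Hales-Jewett theorem *)

Section HalesJewett.
Local Open Scope nat_scope.

Fixpoint words (k n : nat) : list (list nat) :=
  match n with
  | 0 => [[]]
  | S n => flat_map (fun w => map (fun a => a :: w) (seq 0 k)) (words k n)
  end.

Lemma In_words k n w : In w (words k n) <-> length w = n /\ (forall a, In a w -> a < k).
Proof.
  revert w; induction n as [|n IH]; intros w; simpl.
  - split.
    + intros [<-|[]]; simpl; split; [auto|intros a []].
    + intros [Hl _]; destruct w; [auto|discriminate].
  - rewrite in_flat_map. split.
    + intros [w' [Hw' Hm]]. apply in_map_iff in Hm. destruct Hm as [b [<- Hb]].
      apply in_seq in Hb. apply IH in Hw'. destruct Hw' as [H1 H2]. simpl. split; [lia|].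
      intros a [<-|Ha]; [lia|auto].
    + intros [Hl Ha]. destruct w as [|b w]; [discriminate|].
      exists w. split.
      * apply IH. split; [simpl in Hl; lia|]. intros a Hw; apply Ha; right; auto.
      * apply (in_map (fun a => a :: w)). apply in_seq. specialize (Ha b (or_introl eq_refl)). lia.
Qed.

Lemma words_app k N M u w :
  In u (words k N) -> In w (words k M) -> In (u ++ w) (words k (N + M)).
Proof.
  rewrite !In_words. intros [Hu Hua] [Hw Hwa]. rewrite length_app. split; [lia|].
  intros a Ha. apply in_app_or in Ha. destruct Ha; auto.
Qed.

Lemma words_weaken k k' N w : k <= k' -> In w (words k N) -> In w (words k' N).
Proof.
  rewrite !In_words. intros Hk [Hw Ha]. split; [auto|].
  intros a Hin; specialize (Ha a Hin); lia.
Qed.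

Fixpoint tuples {X : Type} (cols : list X) (m : nat) : list (list X) :=
  match m with
  | 0 => [[]]
  | S m => flat_map (fun l => map (fun x => x :: l) cols) (tuples cols m)
  end.

Lemma In_tuples {X} (cols : list X) m l :
  length l = m -> incl l cols -> In l (tuples cols m).
Proof.
  revert l; induction m as [|m IH]; intros l Hl Hincl.
  - destruct l; [left; auto|discriminate].
  - destruct l as [|x l]; [discriminate|]. simpl.
    apply in_flat_map. exists l. split.
    + apply IH; [simpl in Hl; lia|]. intros y Hy; apply Hincl; right; auto.
    + apply (in_map (fun x => x :: l)), Hincl; left; auto.
Qed.

(* A variable word is a list of letters [Some a] and occurrences [None] of the variable. *)
Definition inst (t : list (option nat)) (j : nat) : list nat :=
  map (fun o => match o with None => j | Some a => a end) t.

Lemma inst_app t1 t2 j : inst (t1 ++ t2) j = inst t1 j ++ inst t2 j.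
Proof. apply map_app. Qed.

Lemma inst_const w j : inst (map Some w) j = w.
Proof. unfold inst; rewrite map_map; induction w; simpl; congruence. Qed.

Definition variable_word (k N : nat) (t : list (option nat)) : Prop :=
  length t = N /\ In None t /\ forall a, In (Some a) t -> a < k.

Lemma inst_words k N t j : variable_word k N t -> j < k -> In (inst t j) (words k N).
Proof.
  intros [Hl [_ Ha]] Hj. apply In_words. unfold inst. rewrite length_map. split; [auto|].
  intros b Hb. apply in_map_iff in Hb. destruct Hb as [[c|] [<- Hc]]; auto.
Qed.

Lemma variable_word_weaken k k' N t : k <= k' -> variable_word k N t -> variable_word k' N t.
Proof. intros Hk [H1 [H2 H3]]. split; [|split]; auto. intros a Ha; specialize (H3 a Ha); lia. Qed.

Lemma variable_word_app k N1 N2 t1 t2 :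
  length t1 = N1 -> (forall a, In (Some a) t1 -> a < k) -> variable_word k N2 t2 ->
  variable_word k (N1 + N2) (t1 ++ t2).
Proof.
  intros H1 Ha1 [H2 [Hv2 Ha2]]. split; [|split].
  - rewrite length_app; lia.
  - apply in_or_app; auto.
  - intros a Ha. apply in_app_or in Ha. destruct Ha; auto.
Qed.

Lemma variable_word_app_const k N t w :
  variable_word k N t -> (forall a, In a w -> a < k) ->
  variable_word k (N + length w) (t ++ map Some w).
Proof.
  intros [H1 [Hv Ha]] Hw. split; [|split].
  - rewrite length_app, length_map; lia.
  - apply in_or_app; auto.
  - intros a Hin. apply in_app_or in Hin. destruct Hin as [Hin|Hin]; auto.
    apply in_map_iff in Hin. destruct Hin as [b [Hb Hb']]. injection Hb; intros <-; auto.
Qed.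

Section Colorings.
Variable X : Type.

Definition colored (k N : nat) (c : list nat -> X) (cols : list X) : Prop :=
  forall w, In w (words k N) -> In (c w) cols.

Definition mono_upto (c : list nat -> X) (k : nat) (t : list (option nat)) : Prop :=
  forall j, j < k -> c (inst t j) = c (inst t 0).

Definition focused_lines (c : list nat -> X) (k N s : nat) : Prop :=
  exists ls f, length ls = s /\ In f (words (S k) N) /\
    (forall t, In t ls -> variable_word (S k) N t /\ inst t k = f /\ mono_upto c k t) /\
    NoDup (map (fun t => c (inst t 0)) ls).

Definition focusing (k : nat) (cols : list X) (s : nat) : Prop :=
  exists N, forall c, colored (S k) N c cols ->
    (exists t, variable_word (S k) N t /\ mono_upto c (S k) t) \/ focused_lines c k N s.

Lemma mono_upto_app_const c k t w :
  mono_upto (fun u => c (u ++ w)) k t -> mono_upto c k (t ++ map Some w).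
Proof. intros H j Hj. rewrite !inst_app, !inst_const. apply H; auto. Qed.

Section Extension.
Variables (c : list nat -> X) (k N M : nat) (lam : list (option nat)).
Hypothesis Hlam : variable_word k M lam.
Hypothesis Hprefix : forall u j, In u (words (S k) N) -> j < k ->
  c (u ++ inst lam j) = c (u ++ inst lam 0).

Let c' u := c (u ++ inst lam 0).

Lemma mono_upto_app t :
  variable_word (S k) N t -> mono_upto c' k t -> mono_upto c k (t ++ lam).
Proof.
  intros Ht Hmono j Hj. rewrite !inst_app.
  rewrite Hprefix by (apply inst_words; [auto|lia] || auto). apply Hmono; auto.
Qed.

(* The new family: the old lines extended by [lam], and [f] followed by [lam]. *)
Lemma focused_lines_extend s ls f :
  In f (words (S k) N) ->
  (forall t, In t ls -> variable_word (S k) N t /\ inst t k = f /\ mono_upto c' k t) ->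
  NoDup (map (fun t => c' (inst t 0)) ls) ->
  length ls = s -> ~ (exists t, In t ls /\ c' (inst t 0) = c' f) ->
  focused_lines c k (N + M) (S s).
Proof.
  intros Hf Hlines Hnd Hls Hnew.
  assert (HlamS : variable_word (S k) M lam) by (apply (variable_word_weaken k); auto).
  exists (map (fun t => t ++ lam) ls ++ [map Some f ++ lam]), (f ++ inst lam k).
  apply In_words in Hf. destruct Hf as [Hfl Hfa].
  split; [rewrite length_app, length_map; simpl; lia|]. split.
  { assert (Hw : In (inst lam k) (words (S k) M)) by (apply inst_words; auto).
    apply In_words in Hw. destruct Hw as [Hwl Hwa].
    apply In_words. rewrite length_app. split; [lia|].
    intros a Ha. apply in_app_or in Ha. destruct Ha; auto. }
  split.
  - intros t' Ht'. apply in_app_or in Ht'. destruct Ht' as [Ht'|[<-|[]]].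
    + apply in_map_iff in Ht'. destruct Ht' as [t [<- Ht]].
      destruct (Hlines t Ht) as [[Htl [Htv Hta]] [Htk Hmono]].
      split; [apply variable_word_app; auto|].
      split; [rewrite inst_app, Htk; auto|].
      apply mono_upto_app; [split|]; auto.
    + split; [apply variable_word_app; [rewrite length_map; auto| |auto]|].
      { intros a Ha. apply in_map_iff in Ha. destruct Ha as [b [Hb Hb']].
        injection Hb; intros ->; auto. }
      split; [rewrite inst_app, inst_const; auto|].
      intros j Hj. rewrite !inst_app, !inst_const. apply Hprefix; auto. apply In_words; auto.
  - rewrite map_app, map_map. simpl. rewrite inst_app, inst_const.
    apply (Permutation_NoDup (Permutation_cons_append _ _)). constructor.
    + intros Hin. apply in_map_iff in Hin. destruct Hin as [t [Heq Ht]].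
      apply Hnew. exists t. rewrite inst_app in Heq. auto.
    + erewrite map_ext; [exact Hnd|]. intros t. rewrite inst_app; auto.
Qed.

End Extension.

Definition hales_jewett (k : nat) : Prop :=
  forall (cols : list X), exists N, forall c,
    colored k N c cols -> exists t, variable_word k N t /\ mono_upto c k t.

End Colorings.

Arguments colored {X}.
Arguments mono_upto {X}.
Arguments focused_lines {X}.

Lemma focusing_step k X (cols : list X) s :
  hales_jewett (list X) k -> focusing X k cols s -> focusing X k cols (S s).
Proof.
  intros HJk [N HN].
  destruct (HJk (tuples cols (length (words (S k) N)))) as [M HM].
  exists (N + M). intros c Hc.
  (* colour a suffix [v] by the colours of all the words [u ++ v] *)
  set (C := fun v => map (fun u => c (u ++ v)) (words (S k) N)).
  assert (HC : colored k M C (tuples cols (length (words (S k) N)))).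
  { intros v Hv. apply In_tuples; [apply length_map|].
    intros x Hx. apply in_map_iff in Hx. destruct Hx as [u [<- Hu]].
    apply Hc, words_app; [auto|apply (words_weaken k); auto]. }
  destruct (HM C HC) as [lam [Hlam Hmono]].
  assert (Hprefix : forall u j, In u (words (S k) N) -> j < k ->
            c (u ++ inst lam j) = c (u ++ inst lam 0)).
  { intros u j Hu Hj. pose proof (Hmono j Hj) as Hj'. unfold C in Hj'.
    rewrite map_ext_in_iff in Hj'. auto. }
  assert (HlamS : variable_word (S k) M lam) by (apply (variable_word_weaken k); auto).
  assert (Hlam0 : In (inst lam 0) (words (S k) M)) by (apply inst_words; [auto|lia]).
  set (c' := fun u => c (u ++ inst lam 0)).
  assert (Hc' : colored (S k) N c' cols).
  { intros u Hu. apply Hc, words_app; auto. }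
  assert (Hlift : forall t, variable_word (S k) N t -> mono_upto c' (S k) t ->
            exists t', variable_word (S k) (N + M) t' /\ mono_upto c (S k) t').
  { intros t Ht Htm. exists (t ++ map Some (inst lam 0)). split.
    - apply In_words in Hlam0. destruct Hlam0 as [Hl Ha]. rewrite <- Hl.
      apply variable_word_app_const; auto.
    - apply mono_upto_app_const; auto. }
  destruct (HN c' Hc') as [[t [Ht Htm]]|[ls [f [Hls [Hf [Hlines Hnd]]]]]];
    [left; apply (Hlift t); auto|].
  destruct (classic (exists t, In t ls /\ c' (inst t 0) = c' f)) as [[t [Ht Htf]]|Hnew].
  - left. destruct (Hlines t Ht) as [Htv [Htk Htm]]. apply (Hlift t Htv).
    intros j Hj. destruct (Nat.eq_dec j k) as [->|Hjk]; [rewrite Htk; auto|apply Htm; lia].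
  - right. apply (focused_lines_extend X c k N M lam Hlam Hprefix s ls f); auto.
Qed.

Lemma focusing_all k X (cols : list X) s :
  (forall Y, hales_jewett Y k) -> focusing X k cols s.
Proof.
  intros HJk. induction s as [|s IH]; [|apply focusing_step; auto].
  exists 0. intros c _. right. exists [], []. split; [auto|split; [|split]].
  - apply In_words. split; [auto|intros a []].
  - intros t [].
  - constructor.
Qed.

(* With more focused lines than colours, two of them would share a colour. *)
Lemma hales_jewett_S k : (forall X, hales_jewett X k) -> forall X, hales_jewett X (S k).
Proof.
  intros HJk X cols.
  destruct (focusing_all k X cols (S (length cols)) HJk) as [N HN].
  exists N. intros c Hc.
  destruct (HN c Hc) as [Hline|[ls [f [Hls [_ [Hlines Hnd]]]]]]; [auto|exfalso].
  assert (Hincl : incl (map (fun t => c (inst t 0)) ls) cols).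
  { intros x Hx. apply in_map_iff in Hx. destruct Hx as [t [<- Ht]].
    apply Hc, inst_words; [apply Hlines; auto|lia]. }
  pose proof (NoDup_incl_length Hnd Hincl) as Hle. rewrite length_map in Hle. lia.
Qed.

Theorem hales_jewett_all X k : hales_jewett X k.
Proof.
  revert X; induction k as [|k IH]; [|apply hales_jewett_S; auto].
  intros X cols. exists 1. intros c _. exists [None]. split.
  - split; [auto|split; [left; auto|intros a [H|[]]; discriminate]].
  - intros j Hj. lia.
Qed.
End HalesJewett.

(** * Finite sums and null sequences *)

Lemma NoDup_flat_map (g : nat -> list nat) l : NoDup l ->
  (forall n, In n l -> NoDup (g n)) ->
  (forall n n' x, In n l -> In n' l -> n <> n' -> In x (g n) -> ~ In x (g n')) ->
  NoDup (flat_map g l).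
Proof.
  induction l as [|a l IH]; simpl; intros Hnd Hg Hdis; [constructor|].
  inversion Hnd; subst. apply NoDup_app; auto.
  - apply IH; auto. intros n n' x Hn Hn' Hne; apply Hdis; auto.
  - intros x Hx Hx'. apply in_flat_map in Hx'. destruct Hx' as [n [Hn Hxn]].
    apply (Hdis a n x); auto. intros ->; auto.
Qed.

Lemma sum_over_cons f n l : sum_over f (n :: l) = f n + sum_over f l.
Proof. reflexivity. Qed.

Lemma sum_over_app f l1 l2 : sum_over f (l1 ++ l2) = sum_over f l1 + sum_over f l2.
Proof. induction l1; simpl; [ring|rewrite IHl1; ring]. Qed.

Lemma sum_over_ext f g l : (forall n, In n l -> f n = g n) -> sum_over f l = sum_over g l.
Proof. induction l; simpl; intros H; [auto|rewrite H, IHl; auto]. Qed.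

Lemma sum_over_map f g l : sum_over f (map g l) = sum_over (fun n => f (g n)) l.
Proof. induction l; simpl; [auto|rewrite IHl; auto]. Qed.

Lemma sum_over_flat_map f (g : nat -> list nat) l :
  sum_over f (flat_map g l) = sum_over (fun n => sum_over f (g n)) l.
Proof. induction l; simpl; [auto|rewrite sum_over_app, IHl; auto]. Qed.

Lemma sum_over_plus f g l : sum_over (fun n => f n + g n) l = sum_over f l + sum_over g l.
Proof. induction l; simpl; [ring|rewrite IHl; ring]. Qed.

Lemma sum_over_scal c f l : sum_over (fun n => c * f n) l = c * sum_over f l.
Proof. induction l; simpl; [ring|rewrite IHl; ring]. Qed.

Lemma sum_over_le f g l : (forall n, In n l -> f n <= g n) -> sum_over f l <= sum_over g l.
Proof.
  induction l; simpl; intros H; [lra|].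
  assert (f a <= g a) by auto. assert (sum_over f l <= sum_over g l) by auto. lra.
Qed.

Lemma sum_over_closed (Sg : R -> Prop) g l :
  (forall n x, In n l -> Sg x -> Sg (x + g n)) -> forall x, Sg x -> Sg (x + sum_over g l).
Proof.
  induction l as [|n l IH]; simpl; intros Hg x Hx.
  - rewrite Rplus_0_r; auto.
  - replace (x + (g n + sum_over g l)) with ((x + g n) + sum_over g l) by ring. auto.
Qed.

Lemma geometric_sum_bound K H : NoDup H -> (forall n, In n H -> (n < K)%nat) ->
  sum_over (fun n => (1/2) ^ (S n)) H <= 1 - (1/2) ^ K.
Proof.
  revert H; induction K as [|K IH]; intros H Hnd Hb.
  - destruct H as [|n H]; simpl; [lra|]. specialize (Hb n (or_introl eq_refl)); lia.
  - assert (Hhalf : (1/2) ^ S K = 1/2 * (1/2) ^ K) by (simpl; ring).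
    assert (0 < (1/2) ^ K) by (apply pow_lt; lra).
    destruct (in_dec Nat.eq_dec K H) as [Hin|Hnin].
    + destruct (in_split _ _ Hin) as [l1 [l2 ->]].
      assert (Hr : sum_over (fun n => (1/2) ^ S n) (l1 ++ l2) <= 1 - (1/2) ^ K).
      { apply IH; [eapply NoDup_remove_1; eauto|]. intros n Hn.
        assert (n <> K) by (intros ->; apply (NoDup_remove_2 _ _ _ Hnd); auto).
        assert (n < S K)%nat by (apply Hb; apply in_app_or in Hn; apply in_or_app;
          destruct Hn; [left|right; right]; auto). lia. }
      rewrite sum_over_app in Hr |- *. rewrite sum_over_cons. lra.
    + assert (Hr : sum_over (fun n => (1/2) ^ S n) H <= 1 - (1/2) ^ K).
      { apply IH; auto. intros n Hn. assert (n <> K) by (intros ->; auto).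
        specialize (Hb n Hn). lia. }
      lra.
Qed.

Lemma geometric_sum_le_1 H : NoDup H -> sum_over (fun n => (1/2) ^ (S n)) H <= 1.
Proof.
  intros Hnd. pose proof (geometric_sum_bound (S (list_max H)) H Hnd) as Hb.
  assert (0 < (1/2) ^ S (list_max H)) by (apply pow_lt; lra).
  enough (sum_over (fun n => (1/2) ^ S n) H <= 1 - (1/2) ^ S (list_max H)) by lra.
  apply Hb. intros n Hn.
  assert (Hall : Forall (fun n => (n <= list_max H)%nat) H) by (apply list_max_le; lia).
  rewrite Forall_forall in Hall. specialize (Hall n Hn). lia.
Qed.

Lemma cv_dominated_geometric (u : nat -> R) K :
  (forall n, 0 <= u n <= K * (1/2) ^ n) -> Un_cv u 0.
Proof.
  intros Hu eps Heps.
  assert (HK : 0 <= K) by (specialize (Hu 0%nat); simpl in Hu; lra).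
  destruct (pow_lt_1_zero (1/2) ltac:(rewrite Rabs_right; lra) (eps / (K + 1)))
    as [N HN]; [apply Rdiv_lt_0_compat; lra|].
  exists N. intros n Hn. specialize (HN n Hn). specialize (Hu n).
  unfold R_dist. rewrite Rminus_0_r, Rabs_right by lra.
  rewrite Rabs_right in HN by (apply Rle_ge, pow_le; lra).
  assert (0 <= (1/2) ^ n) by (apply pow_le; lra).
  assert (Hlt : (K + 1) * (1/2) ^ n < eps).
  { apply (Rmult_lt_compat_l (K + 1)) in HN; [|lra].
    replace ((K + 1) * (eps / (K + 1))) with eps in HN by (field; lra). lra. }
  nra.
Qed.

Lemma tau0_geometric Sg (HS : dense_subsemigroup Sg) eps : 0 < eps ->
  exists f, tau0 Sg f /\ forall n, f n < eps * (1/2) ^ (S n).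
Proof.
  intros He. destruct HS as [_ [_ Hden]].
  assert (Hex : forall n : nat, exists s, Sg s /\ 0 < s < eps * (1/2) ^ (S n)).
  { intros n.
    assert (0 < eps * (1/2) ^ (S n)) by (apply Rmult_lt_0_compat; [lra|apply pow_lt; lra]).
    destruct (Hden (eps * (1/2) ^ (S n) / 2) (eps * (1/2) ^ (S n))) as [s [Hs1 [Hs2 Hs3]]]; try lra.
    exists s; split; [auto|lra]. }
  destruct (choice _ Hex) as [f Hf].
  exists f. split; [split|]; [intros n; apply Hf| |intros n; apply Hf].
  apply (cv_dominated_geometric _ eps). intros n. destruct (Hf n) as [_ [H1 H2]].
  split; [lra|]. simpl in H2. assert (0 <= (1/2) ^ n) by (apply pow_le; lra). nra.
Qed.

Lemma eventually_below (F : list (nat -> R)) e :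
  (forall f, In f F -> Un_cv f 0) -> 0 < e ->
  exists T, forall q f, (T <= q)%nat -> In f F -> f q < e.
Proof.
  intros HF He. induction F as [|f F IH].
  - exists 0%nat. intros q f _ [].
  - destruct IH as [T1 HT1]; [intros; apply HF; right; auto|].
    destruct (HF f (or_introl eq_refl) e He) as [T2 HT2].
    exists (Nat.max T1 T2). intros q g Hq [<-|Hg]; [|apply HT1; auto; lia].
    specialize (HT2 q ltac:(lia)). unfold R_dist in HT2.
    rewrite Rminus_0_r in HT2. pose proof (Rle_abs (f q)). lra.
Qed.

Fixpoint block_start (T : nat -> nat) (N n : nat) : nat :=
  match n with
  | 0 => T 0%nat
  | S n' => (block_start T N n' + N + T n)%nat
  end.

Lemma block_starts (F : list (nat -> R)) (e : nat -> R) (N : nat) :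
  (forall f, In f F -> Un_cv f 0) -> (forall n, 0 < e n) ->
  exists m : nat -> nat, (forall n n', (n < n')%nat -> (m n + N <= m n')%nat) /\
    forall n q f, (m n <= q)%nat -> In f F -> f q < e n.
Proof.
  intros HF He.
  destruct (choice _ (fun n => eventually_below F (e n) HF (He n))) as [T HT].
  exists (block_start T N). split.
  - intros n n' Hlt. induction Hlt; simpl; lia.
  - intros n q f Hq Hf. apply (HT n); auto. destruct n; simpl in Hq; lia.
Qed.

(** * Words read along blocks *)

Section BlockSums.
(* [fk a] is the [a]-th sequence of a finite family. *)
Variable fk : nat -> nat -> R.

Fixpoint fixed_sum (t : list (option nat)) (base : nat) : R :=
  match t with
  | [] => 0
  | None :: t' => fixed_sum t' (S base)
  | Some a :: t' => fk a base + fixed_sum t' (S base)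
  end.

Fixpoint free_positions (t : list (option nat)) (base : nat) : list nat :=
  match t with
  | [] => []
  | None :: t' => base :: free_positions t' (S base)
  | Some _ :: t' => free_positions t' (S base)
  end.

Lemma fixed_sum_inst t i base :
  fixed_sum (map Some (inst t i)) base = fixed_sum t base + sum_over (fk i) (free_positions t base).
Proof.
  revert base; induction t as [|[a|] t IH]; intros base; simpl; [ring| |];
  rewrite IH, ?sum_over_cons; ring.
Qed.

Lemma free_positions_range t base x :
  In x (free_positions t base) -> (base <= x < base + length t)%nat.
Proof.
  revert base; induction t as [|[a|] t IH]; intros base; simpl; [intros []| |].
  - intros H; apply IH in H; lia.
  - intros [<-|H]; [lia|apply IH in H; lia].
Qed.

Lemma free_positions_NoDup t base : NoDup (free_positions t base).
Proof.
  revert base; induction t as [|[a|] t IH]; intros base; simpl; [constructor|auto|].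
  constructor; auto. intros H; apply free_positions_range in H; lia.
Qed.

Lemma free_positions_nil t base : In None t -> free_positions t base <> [].
Proof.
  revert base; induction t as [|[a|] t IH]; intros base; simpl; [intros []| |].
  - intros [H|H]; [discriminate|apply IH; auto].
  - intros _; discriminate.
Qed.

Lemma fixed_sum_bound t base e : 0 <= e ->
  (forall a q, In (Some a) t -> (base <= q)%nat -> 0 < fk a q < e) ->
  0 <= fixed_sum t base <= INR (length t) * e.
Proof.
  revert base; induction t as [|[a|] t IH]; intros base He Hb; simpl length; simpl fixed_sum.
  - simpl; lra.
  - assert (0 < fk a base < e) by (apply Hb; [left; auto|lia]).
    assert (0 <= fixed_sum t (S base) <= INR (length t) * e).
    { apply IH; auto. intros a' q Ha Hq. apply Hb; [right; auto|lia]. }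
    rewrite S_INR. lra.
  - assert (0 <= fixed_sum t (S base) <= INR (length t) * e).
    { apply IH; auto. intros a' q Ha Hq. apply Hb; [right; auto|lia]. }
    rewrite S_INR. lra.
Qed.

Lemma fixed_sum_closed (Sg : R -> Prop) (Hadd : forall x y, Sg x -> Sg y -> Sg (x + y)) t base :
  (forall a q, In (Some a) t -> Sg (fk a q)) -> forall x, Sg x -> Sg (x + fixed_sum t base).
Proof.
  revert base; induction t as [|[a|] t IH]; intros base Ht x Hx; simpl.
  - rewrite Rplus_0_r; auto.
  - replace (x + (fk a base + fixed_sum t (S base))) with
      ((x + fk a base) + fixed_sum t (S base)) by ring.
    apply IH; [intros; apply Ht; right; auto|]. apply Hadd; auto. apply Ht; left; auto.
  - apply IH; auto. intros; apply Ht; right; auto.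
Qed.

End BlockSums.

Section Blocks.
Variables (Sg : R -> Prop) (fk : nat -> nat -> R) (k N : nat) (c0 : R) (m : nat -> nat).
Hypothesis Hadd : forall x y, Sg x -> Sg y -> Sg (x + y).
Hypothesis Hc0 : 0 < c0.
Hypothesis Hfk_in : forall a q, (a < k)%nat -> Sg (fk a q).
Hypothesis Hfk_small : forall n a q, (a < k)%nat -> (m n <= q)%nat ->
  0 < fk a q < c0 * (1/2) ^ S n.
Hypothesis HN : (0 < N)%nat.
Hypothesis Hm_sep : forall n n', (n < n')%nat -> (m n + N <= m n')%nat.

(* The word [w] read on the [n]-th block [m n, ..., m n + N - 1]. *)
Definition block_seq (w : list nat) (n : nat) : R := fixed_sum fk (map Some w) (m n).

Lemma fixed_sum_block t n : length t = N -> (forall a, In (Some a) t -> (a < k)%nat) ->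
  0 <= fixed_sum fk t (m n) <= INR N * c0 * (1/2) ^ S n.
Proof.
  intros Hl Ha. rewrite Rmult_assoc, <- Hl.
  apply fixed_sum_bound; [apply Rlt_le, Rmult_lt_0_compat; [lra|apply pow_lt; lra]|].
  intros a q Hin Hq. apply Hfk_small; auto.
Qed.

Lemma block_seq_tau0 w : In w (words k N) -> tau0 Sg (block_seq w).
Proof.
  intros Hw. apply In_words in Hw. destruct Hw as [Hl Ha].
  assert (Hletters : forall a, In (Some a) (map Some w) -> (a < k)%nat).
  { intros a Hin. apply in_map_iff in Hin. destruct Hin as [b [Hb Hb']].
    injection Hb; intros <-; auto. }
  split.
  - intros n. destruct w as [|b w]; [simpl in Hl; lia|]. unfold block_seq. simpl.
    apply (fixed_sum_closed fk Sg Hadd); [|apply Hfk_in, Ha; left; auto].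
    intros a q Hin. apply Hfk_in, Hletters. right; auto.
  - apply (cv_dominated_geometric _ (INR N * c0)). intros n.
    destruct (fixed_sum_block (map Some w) n) as [H1 H2]; [rewrite length_map; auto|auto|].
    unfold block_seq. simpl in H2. lra.
Qed.

Lemma collapse_line t a H delta : variable_word k N t ->
  Sg a -> a < delta / 2 -> H <> [] -> NoDup H -> INR N * c0 <= delta / 2 ->
  exists a' H', Sg a' /\ a' < delta /\ H' <> [] /\ NoDup H' /\
    forall i, a + sum_over (block_seq (inst t i)) H = a' + sum_over (fk i) H'.
Proof.
  intros [Htl [HtN Htk]] Ha Had HH HHnd HNc.
  exists (a + sum_over (fun n => fixed_sum fk t (m n)) H),
         (flat_map (fun n => free_positions t (m n)) H).
  split; [|split; [|split; [|split]]].
  - apply sum_over_closed; auto. intros n x _ Hx.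
    apply (fixed_sum_closed fk Sg Hadd); auto.
  - enough (sum_over (fun n => fixed_sum fk t (m n)) H <= INR N * c0) by lra.
    apply Rle_trans with (sum_over (fun n => INR N * c0 * (1/2) ^ S n) H).
    + apply sum_over_le. intros n _. apply fixed_sum_block; auto.
    + rewrite sum_over_scal. pose proof (geometric_sum_le_1 H HHnd).
      assert (0 <= INR N * c0) by (pose proof (pos_INR N); nra). nra.
  - destruct H as [|n0 H]; [congruence|]. simpl.
    pose proof (free_positions_nil t (m n0) HtN).
    destruct (free_positions t (m n0)); [congruence|discriminate].
  - apply NoDup_flat_map; auto; [intros; apply free_positions_NoDup|].
    intros n n' x _ _ Hne Hx Hx'.
    apply free_positions_range in Hx. apply free_positions_range in Hx'.
    destruct (Nat.lt_gt_cases n n') as [[Hlt|Hlt] _]; auto;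
      [pose proof (Hm_sep n n' Hlt)|pose proof (Hm_sep n' n Hlt)]; lia.
  - intros i. unfold block_seq. rewrite sum_over_flat_map, Rplus_assoc, <- sum_over_plus.
    f_equal. apply sum_over_ext. intros n _. apply fixed_sum_inst.
Qed.

Lemma monochromatic_collapse (A B : R -> Prop) a H delta :
  (forall c, colored bool k N c [true; false] ->
     exists t, variable_word k N t /\ mono_upto bool c k t) ->
  Sg a -> a < delta / 2 -> H <> [] -> NoDup H -> INR N * c0 <= delta / 2 ->
  (forall w, In w (words k N) ->
     A (a + sum_over (block_seq w) H) \/ B (a + sum_over (block_seq w) H)) ->
  exists a' H', Sg a' /\ a' < delta /\ H' <> [] /\ NoDup H' /\
    ((forall i, (i < k)%nat -> A (a' + sum_over (fk i) H')) \/
     (forall i, (i < k)%nat -> B (a' + sum_over (fk i) H'))).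
Proof.
  intros HJ Ha Had HH HHnd HNc HAB.
  set (col := fun w => if excluded_middle_informative (A (a + sum_over (block_seq w) H))
                       then true else false).
  destruct (HJ col) as [t [Ht Hmono]].
  { intros w _. unfold col. destruct (excluded_middle_informative _); simpl; auto. }
  destruct (collapse_line t a H delta) as [a' [H' [Ha' [Ha'd [HH' [HH'nd Hval]]]]]]; auto.
  exists a', H'. repeat split; auto.
  assert (Hcol : forall i, (i < k)%nat -> col (inst t i) = col (inst t 0)) by exact Hmono.
  destruct (col (inst t 0)); [left|right]; intros i Hi; rewrite <- Hval;
    specialize (Hcol i Hi); unfold col in Hcol;
    destruct (excluded_middle_informative _) as [HA|HnA]; try discriminate; auto.
  destruct (HAB (inst t i)); [apply inst_words; auto|contradiction|auto].
Qed.
End Blocks.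

(** * Partition regularity of J-sets near zero *)

(* [Jset_near_zero Sg A] unfolds to
   [forall F, ... -> forall delta, 0 < delta -> Jconfig Sg A F delta]. *)
Definition Jconfig (Sg A : R -> Prop) (F : list (nat -> R)) (delta : R) : Prop :=
  exists a (H : list nat), Sg a /\ a < delta /\ H <> [] /\ NoDup H /\
    forall f, In f F -> A (a + sum_over f H).

Lemma Jconfig_mono (Sg A A' : R -> Prop) F F' d d' :
  (forall x, A x -> A' x) -> incl F' F -> d <= d' -> Jconfig Sg A F d -> Jconfig Sg A' F' d'.
Proof.
  intros HA HF Hd [a [H [Ha [Had [HH [HHnd Hf]]]]]].
  exists a, H. repeat split; auto. lra.
Qed.

Lemma Jset_mono Sg (A B : R -> Prop) :
  (forall x, A x -> B x) -> Jset_near_zero Sg A -> Jset_near_zero Sg B.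
Proof.
  intros HAB HA F HF Ht d Hd. apply (Jconfig_mono Sg A B F F d d); auto.
  - apply incl_refl.
  - lra.
  - apply HA; auto.
Qed.

Lemma not_Jset_witness Sg A : ~ Jset_near_zero Sg A ->
  exists F delta, F <> [] /\ (forall f, In f F -> tau0 Sg f) /\ 0 < delta /\ ~ Jconfig Sg A F delta.
Proof.
  intros Hn. apply NNPP; intros Hc. apply Hn. intros F HF Ht d Hd.
  apply NNPP; intros Hc2. apply Hc. exists F, d. auto.
Qed.

Section PartitionRegularity.
Variable Sg : R -> Prop.
Hypothesis HS : dense_subsemigroup Sg.

(* The [n]-th block lies where every sequence of [F] is below [c0 * 2^-(n+1)]: this makes
   the block sequences null and keeps the collapsed configuration below [delta]. *)
Lemma Jconfig_union A B F delta :
  Jset_near_zero Sg (fun x => A x \/ B x) -> F <> [] -> (forall f, In f F -> tau0 Sg f) ->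
  0 < delta -> Jconfig Sg A F delta \/ Jconfig Sg B F delta.
Proof.
  intros HJ HF Ht Hd. destruct HS as [Hpos [Hadd _]].
  set (k := length F). set (fk := fun a => nth a F (fun _ => 0)).
  assert (Hk : (0 < k)%nat) by (unfold k; destruct F; [congruence|simpl; lia]).
  assert (Hfk : forall a, (a < k)%nat -> In (fk a) F) by (intros; apply nth_In; auto).
  destruct (hales_jewett_all bool k [true; false]) as [N HN].
  assert (HN0 : (0 < N)%nat).
  { destruct (HN (fun _ => true)) as [t [[Htl [HtN _]] _]]; [intros w _; left; auto|].
    destruct t; [destruct HtN|simpl in Htl; lia]. }
  set (c0 := delta / (2 * (INR N + 1))).
  assert (Hc0 : 0 < c0) by (apply Rdiv_lt_0_compat; pose proof (pos_INR N); lra).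
  assert (HNc : INR N * c0 <= delta / 2).
  { unfold c0. pose proof (pos_INR N).
    apply (Rmult_le_reg_r (2 * (INR N + 1))); [lra|]. field_simplify; lra. }
  destruct (block_starts F (fun n => c0 * (1/2) ^ S n) N) as [m [Hsep Hsmall]].
  { intros f Hf. apply Ht; auto. }
  { intros n. apply Rmult_lt_0_compat; [lra|apply pow_lt; lra]. }
  assert (Hfk_in : forall a q, (a < k)%nat -> Sg (fk a q))
    by (intros a q Ha; apply (Ht _ (Hfk a Ha))).
  assert (Hfk_small : forall n a q, (a < k)%nat -> (m n <= q)%nat ->
            0 < fk a q < c0 * (1/2) ^ S n) by (intros; split; [apply Hpos|apply Hsmall]; auto).
  destruct (HJ (map (block_seq fk m) (words k N))) with (delta := delta / 2)
    as [a [H [Ha [Had [HH [HHnd HAB]]]]]]; [| |lra|].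
  { assert (Hw : In (repeat 0%nat N) (words k N)).
    { apply In_words. split; [apply repeat_length|]. intros a Ha. apply repeat_spec in Ha. lia. }
    destruct (words k N); [destruct Hw|discriminate]. }
  { intros g Hg. apply in_map_iff in Hg. destruct Hg as [w [<- Hw]].
    eapply block_seq_tau0; eauto. }
  assert (HAB' : forall w, In w (words k N) ->
    A (a + sum_over (block_seq fk m w) H) \/ B (a + sum_over (block_seq fk m w) H))
    by (intros w Hw; apply HAB, in_map; auto).
  destruct (monochromatic_collapse Sg fk k N c0 m Hadd Hc0 Hfk_in Hfk_small HN0 Hsep A B a H delta)
    as [a' [H' [Ha' [Ha'd [HH' [HH'nd Hmono]]]]]]; auto.
  destruct Hmono as [HA|HB]; [left|right]; exists a', H'; repeat split; auto; intros f Hf;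
    destruct (In_nth F f (fun _ => 0) Hf) as [i [Hi <-]]; first [apply HA | apply HB]; auto.
Qed.

Lemma Jset_union A B :
  Jset_near_zero Sg (fun x => A x \/ B x) -> Jset_near_zero Sg A \/ Jset_near_zero Sg B.
Proof.
  intros HJ. destruct (classic (Jset_near_zero Sg B)) as [|HnB]; [right; auto|left].
  destruct (not_Jset_witness _ _ HnB) as [F2 [d2 [HF2 [Ht2 [Hd2 Hno]]]]].
  intros F1 HF1 Ht1 d1 Hd1.
  destruct (Jconfig_union A B (F1 ++ F2) (Rmin d1 d2) HJ) as [HA|HB].
  - destruct F1; [congruence|discriminate].
  - intros f Hf. apply in_app_or in Hf. destruct Hf; auto.
  - apply Rmin_pos; auto.
  - apply (Jconfig_mono Sg A A (F1 ++ F2) F1 (Rmin d1 d2) d1); auto.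
    + apply incl_appl, incl_refl.
    + apply Rmin_l.
  - exfalso. apply Hno, (Jconfig_mono Sg B B (F1 ++ F2) F2 (Rmin d1 d2) d2); auto.
    + apply incl_appr, incl_refl.
    + apply Rmin_r.
Qed.

Lemma empty_not_Jset A : (forall x, ~ A x) -> ~ Jset_near_zero Sg A.
Proof.
  intros HA HJ. destruct (tau0_geometric Sg HS 1 ltac:(lra)) as [f [Hf _]].
  destruct (HJ [f] ltac:(discriminate) ltac:(intros g [<-|[]]; auto) 1 ltac:(lra))
    as [a [H [_ [_ [_ [_ Hx]]]]]].
  apply (HA _ (Hx f (or_introl eq_refl))).
Qed.

Lemma Jset_full : Jset_near_zero Sg Sg.
Proof.
  destruct HS as [_ [Hadd Hden]]. intros F HF Ht d Hd.
  destruct (Hden (d / 2) d) as [a [Ha [Ha1 Ha2]]]; try lra.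
  exists a, [0%nat]. repeat split; auto.
  - discriminate.
  - constructor; [intros []|constructor].
  - intros f Hf. simpl. rewrite Rplus_0_r. apply Hadd; auto. apply (Ht f Hf).
Qed.

(* A configuration along a sequence dominated by [eps/2 * 2^-(n+1)] sums to less than [eps]. *)
Lemma Kfam_small eps : 0 < eps -> Kfam Sg (fun x => Sg x /\ x < eps).
Proof.
  intros He. split; [intros x []; auto|]. intros HJ.
  destruct (tau0_geometric Sg HS (eps / 2) ltac:(lra)) as [f [Hf Hfb]].
  destruct (HJ [f] ltac:(discriminate) ltac:(intros g [<-|[]]; auto) (eps / 2) ltac:(lra))
    as [a [H [Ha [Had [_ [HHnd Hx]]]]]].
  destruct (Hx f (or_introl eq_refl)) as [HS1 HS2]. apply HS2. split; auto.
  enough (sum_over f H <= eps / 2) by lra.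
  apply Rle_trans with (sum_over (fun n => eps / 2 * (1/2) ^ S n) H).
  - apply sum_over_le. intros n _. apply Rlt_le, Hfb.
  - rewrite sum_over_scal. pose proof (geometric_sum_le_1 H HHnd). nra.
Qed.

Lemma Kfam_filter : filter_on Sg (Kfam Sg).
Proof.
  split; [intros A []; auto|]. split; [|split; [|split]].
  - split; [intros x; auto|]. apply empty_not_Jset. intros x []; auto.
  - intros [_ Hn]. apply Hn, (Jset_mono Sg Sg); [|apply Jset_full]. intros x Hx; split; auto.
  - intros A B [HA1 HA2] [HB1 HB2]. split; [intros x [Hx _]; auto|]. intros HJ.
    apply (Jset_mono _ _ (fun x => (Sg x /\ ~ A x) \/ (Sg x /\ ~ B x))) in HJ.
    + destruct (Jset_union _ _ HJ); auto.
    + intros x [Hx Hn]. destruct (classic (A x)); [right|left]; split; auto.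
  - intros A B [HA1 HA2] HAB HBS. split; auto. intros HJ. apply HA2.
    apply (Jset_mono _ _ _ (fun x '(conj Hx Hn) => conj Hx (fun h => Hn (HAB x h))) HJ).
Qed.

End PartitionRegularity.

(** * Ultrafilters *)

Lemma ultrafilter_extends (Sg : R -> Prop) (G : (R -> Prop) -> Prop) :
  filter_on Sg G -> exists p, ultrafilter Sg p /\ forall D, G D -> p D.
Proof.
  intros [GS [GSg [G0 [GI GU]]]].
  set (F := fun B : R -> Prop => exists A, G A /\ forall x, A x -> B x).
  assert (HF : filter.ProperFilter F).
  { split; [|split].
    - intros [A [GA HA]]. apply G0, (GU A); [auto|intros x Hx; exact (HA x Hx)|intros x []].
    - exists Sg. split; [auto|intros x _; exact I].
    - intros A B [A1 [GA1 HA1]] [B1 [GB1 HB1]].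
      exists (fun x => A1 x /\ B1 x). split; [auto|]. intros x [Hx1 Hx2]. split; auto.
    - intros P Q PQ [A [GA HA]]. exists A. split; auto. }
  destruct (filter.ultraFilterLemma HF) as [U [HU FU]].
  assert (UF : filter.Filter U) by (destruct HU as [[_ UF] _]; exact UF).
  assert (USg : U Sg) by (apply FU; exists Sg; auto).
  exists (fun A => subsetR A Sg /\ U A).
  split; [|intros D GD; split; [apply GS; auto|apply FU; exists D; auto]].
  split; [intros A []; auto|]. split; [split; [intros x; auto|auto]|]. split; [|split; [|split]].
  - intros [_ U0]. destruct HU as [[HU0 _] _]. apply HU0. exact U0.
  - intros A B [HA UA] [HB UB]. split; [intros x [Hx _]; auto|].
    exact (filter.filterI UA UB).
  - intros A B [HA UA] HAB HBS. split; [auto|]. exact (filter.filterS HAB UA).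
  - intros A HA. destruct (filter.in_ultra_setVsetC A HU) as [UA|UnA]; [left|right]; split; auto.
    + intros x []; auto.
    + refine (filter.filterS _ (filter.filterI USg UnA)). intros x Hx; exact Hx.
Qed.

Section Ultrafilter.
Variables (Sg : R -> Prop) (p : (R -> Prop) -> Prop).
Hypothesis Hu : ultrafilter Sg p.

Lemma uf_subset A : p A -> subsetR A Sg.
Proof. destruct Hu as [H _]; auto. Qed.

Lemma uf_superset A B : p A -> (forall x, A x -> B x) -> subsetR B Sg -> p B.
Proof. destruct Hu as [_ [_ [_ [_ [H _]]]]]; intros; eapply H; eauto. Qed.

Lemma uf_inter A B : p A -> p B -> p (fun x => A x /\ B x).
Proof. destruct Hu as [_ [_ [_ [H _]]]]; auto. Qed.

Lemma uf_full : p Sg.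
Proof. destruct Hu as [_ [H _]]; auto. Qed.

Lemma uf_not_empty : ~ p (fun _ => False).
Proof. destruct Hu as [_ [_ [H _]]]; auto. Qed.

Lemma uf_or_compl A : subsetR A Sg -> p A \/ p (fun x => Sg x /\ ~ A x).
Proof. destruct Hu as [_ [_ [_ [_ [_ H]]]]]; auto. Qed.

Lemma uf_not_compl A : p A -> ~ p (fun x => Sg x /\ ~ A x).
Proof.
  intros H1 H2. apply uf_not_empty, (uf_superset _ _ (uf_inter _ _ H1 H2)).
  - intros x [Ha [_ Hna]]; auto.
  - intros x [].
Qed.

Lemma uf_inter_list {Y} (C : R -> Prop) (Q : Y -> R -> Prop) (L : list Y) :
  p C -> (forall y, In y L -> p (Q y)) -> p (fun x => C x /\ forall y, In y L -> Q y x).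
Proof.
  intros HC. induction L as [|y0 L IH]; intros HQ.
  - apply (uf_superset _ _ HC); [intros x Hx; split; [auto|intros y []]|].
    intros x [Hx _]; apply (uf_subset _ HC); auto.
  - apply (uf_superset _ _
      (uf_inter _ _ (HQ y0 (or_introl eq_refl)) (IH (fun y Hy => HQ y (or_intror Hy))))).
    + intros x [Hq [Hc Hall]]. split; auto. intros y [<-|Hy]; auto.
    + intros x [Hx _]; apply (uf_subset _ HC); auto.
Qed.

End Ultrafilter.

Lemma J0_iff_Kbar Sg (HS : dense_subsemigroup Sg) p : J0 Sg p <-> Kbar Sg (Kfam Sg) p.
Proof.
  split.
  - intros [[Hu _] HJ]. split; [auto|]. intros A [HAS HnJ].
    destruct (uf_or_compl Sg p Hu A HAS) as [|Hc]; [auto|]. exfalso. apply HnJ, HJ; auto.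
  - intros [Hu HK]. split; [split; [auto|]|].
    + intros eps He. apply HK, Kfam_small; auto.
    + intros A HA. apply NNPP; intros HnJ. apply (uf_not_compl Sg p Hu A HA), HK.
      split; [intros x []; auto|]. intros HJ'. apply HnJ.
      apply (Jset_mono _ _ _ (fun x '(conj Hx Hn) => NNPP _ (fun Hc => Hn (conj Hx Hc))) HJ').
Qed.

Lemma ult_add_ultrafilter Sg (Hadd : forall x y, Sg x -> Sg y -> Sg (x + y)) p q :
  ultrafilter Sg p -> ultrafilter Sg q -> ultrafilter Sg (ult_add Sg p q).
Proof.
  intros Hp Hq.
  set (shift A x := Sg x /\ q (fun y => Sg y /\ A (x + y))).
  assert (Hshift : forall A, subsetR (shift A) Sg) by (intros A x []; auto).
  split; [intros A []; auto|]. split; [|split; [|split; [|split]]].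
  - split; [intros x; auto|].
    apply (uf_superset Sg p Hp _ _ (uf_full Sg p Hp)); [|intros x []; auto].
    intros x Hx. split; [auto|].
    apply (uf_superset Sg q Hq _ _ (uf_full Sg q Hq)); [|intros y []; auto].
    intros y Hy; split; auto.
  - intros [_ Hp0]. apply (uf_not_empty Sg p Hp), (uf_superset Sg p Hp _ _ Hp0); [|intros x []].
    intros x [Hx Hq0]. apply (uf_not_empty Sg q Hq), (uf_superset Sg q Hq _ _ Hq0); [|intros y []].
    intros y [_ []].
  - intros A B [HA pA] [HB pB]. split; [intros x [Hx _]; auto|].
    apply (uf_superset Sg p Hp _ _ (uf_inter Sg p Hp _ _ pA pB)); [|intros x []; auto].
    intros x [[Hx qA] [_ qB]]. split; [auto|].
    apply (uf_superset Sg q Hq _ _ (uf_inter Sg q Hq _ _ qA qB)); [|intros y []; auto].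
    intros y [[Hy Ay] [_ By]]. split; auto.
  - intros A B [HA pA] HAB HBS. split; [auto|].
    apply (uf_superset Sg p Hp _ _ pA); [|intros x []; auto].
    intros x [Hx qA]. split; [auto|]. apply (uf_superset Sg q Hq _ _ qA); [|intros y []; auto].
    intros y [Hy Ay]; split; auto.
  - intros A HAS.
    destruct (uf_or_compl Sg p Hp (shift A) (Hshift A)) as [H1|H2]; [left; split; auto|].
    right. split; [intros x []; auto|].
    apply (uf_superset Sg p Hp _ _ H2); [|intros x []; auto].
    intros x [Hx Hn]. split; [auto|].
    destruct (uf_or_compl Sg q Hq (fun y => Sg y /\ A (x + y))) as [Hq1|Hq2];
      [intros y []; auto|exfalso; apply Hn; split; auto|].
    apply (uf_superset Sg q Hq _ _ Hq2); [|intros y []; auto].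
    intros y [Hy Hny]. split; [auto|]. split; [apply Hadd; auto|]. intros HA'. apply Hny; auto.
Qed.

Lemma tau0_shift Sg f M : tau0 Sg f -> tau0 Sg (fun n => f (n + M)%nat).
Proof.
  intros [HfS Hcv]. split; [intros n; apply HfS|].
  intros eps He. destruct (Hcv eps He) as [N HN]. exists N. intros n Hn. apply HN. lia.
Qed.

Lemma NoDup_app_shift H H2 : NoDup H -> NoDup H2 ->
  NoDup (H ++ map (fun n => (n + S (list_max H))%nat) H2).
Proof.
  intros Hnd Hnd2. apply NoDup_app; auto.
  - apply NoDup_map_inv with (f := fun n => (n - S (list_max H))%nat).
    rewrite map_map. erewrite map_ext; [rewrite map_id; auto|]. intros n; simpl; lia.
  - intros x Hx1 Hx2. apply in_map_iff in Hx2. destruct Hx2 as [y [<- _]].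
    assert (Hall : Forall (fun n => (n <= list_max H)%nat) H) by (apply list_max_le; lia).
    rewrite Forall_forall in Hall. specialize (Hall _ Hx1). lia.
Qed.

Lemma ult_add_Oplus Sg (Hadd : forall x y, Sg x -> Sg y -> Sg (x + y)) p q :
  Oplus Sg p -> Oplus Sg q -> Oplus Sg (ult_add Sg p q).
Proof.
  intros [Hp Hsp] [Hq Hsq]. split; [apply ult_add_ultrafilter; auto|].
  intros eps He. split; [intros x []; auto|].
  apply (uf_superset Sg p Hp _ _ (Hsp (eps / 2) ltac:(lra))); [|intros x []; auto].
  intros x [Hx Hxe]. split; [auto|].
  apply (uf_superset Sg q Hq _ _ (Hsq (eps / 2) ltac:(lra))); [|intros y []; auto].
  intros y [Hy Hye]. split; [auto|]. split; [apply Hadd; auto|lra].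
Qed.

(* A configuration for [p] and, above its indices, a configuration for [q] inside the
   [q]-large set of common shifts, concatenate into one for [p + q]. *)
Lemma ult_add_Jset Sg (Hadd : forall x y, Sg x -> Sg y -> Sg (x + y)) p q A :
  J0 Sg p -> J0 Sg q -> ult_add Sg p q A -> Jset_near_zero Sg A.
Proof.
  intros [[Hp _] HJp] [[Hq _] HJq] [_ pA] F HF Ht delta Hd.
  destruct (HJp _ pA F HF Ht (delta / 2) ltac:(lra)) as [a [H [Ha [Had [HH [HHnd Hx]]]]]].
  set (M := S (list_max H)).
  set (F' := map (fun f n => f (n + M)%nat) F).
  destruct (HJq (fun y => Sg y /\ forall f, In f F -> Sg y /\ A (a + sum_over f H + y)))
    with (F := F') (delta := delta / 2) as [b [H2 [Hb [Hbd [HH2 [HH2nd Hy]]]]]].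
  - apply (uf_inter_list Sg q Hq Sg (fun f y => Sg y /\ A (a + sum_over f H + y)) F
      (uf_full Sg q Hq)).
    intros f Hf. apply (Hx f Hf).
  - unfold F'. destruct F; [congruence|discriminate].
  - intros f' Hf'. apply in_map_iff in Hf'. destruct Hf' as [f [<- Hf]]. apply tau0_shift; auto.
  - lra.
  - exists (a + b), (H ++ map (fun n => (n + M)%nat) H2).
    split; [apply Hadd; auto|]. split; [lra|]. split; [destruct H; [congruence|discriminate]|].
    split; [apply NoDup_app_shift; auto|].
    intros f Hf. destruct (Hy _ (in_map (fun f n => f (n + M)%nat) F f Hf)) as [_ Hall].
    destruct (Hall f Hf) as [_ HA].
    rewrite sum_over_app, sum_over_map.
    replace (a + b + (sum_over f H + sum_over (fun n => f (n + M)%nat) H2)) with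
      (a + sum_over f H + (b + sum_over (fun n => f (n + M)%nat) H2)) by ring.
    exact HA.
Qed.

Lemma ult_add_J0 Sg (Hadd : forall x y, Sg x -> Sg y -> Sg (x + y)) p q :
  J0 Sg p -> J0 Sg q -> J0 Sg (ult_add Sg p q).
Proof.
  intros Hp Hq. split; [apply ult_add_Oplus; [auto|apply Hp|apply Hq]|].
  intros A HA. apply (ult_add_Jset Sg Hadd p q); auto.
Qed.

(* The finite intersection property: [K] together with the complements of the sets [L j]. *)
Lemma ultrafilter_avoiding (Sg : R -> Prop) (K : (R -> Prop) -> Prop) {J : Type}
  (L : J -> R -> Prop) :
  filter_on Sg K -> (forall j, subsetR (L j) Sg) ->
  (forall l : list J, exists p, Kbar Sg K p /\ forall j, In j l -> ~ p (L j)) ->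
  exists q, Kbar Sg K q /\ forall j, ~ q (L j).
Proof.
  intros [KS [KSg [K0 [KI KU]]]] HL Hfin.
  set (G := fun D => subsetR D Sg /\ exists C l, K C /\
              forall x, C x -> (forall j, In j l -> Sg x /\ ~ L j x) -> D x).
  assert (HG : filter_on Sg G).
  { split; [intros D []; auto|]. split; [|split; [|split]].
    - split; [intros x; auto|]. exists Sg, []. auto.
    - intros [_ [C [l [HC Hx]]]]. destruct (Hfin l) as [p [[Hp HpK] Hpl]].
      assert (Hcompl : forall j, In j l -> p (fun x => Sg x /\ ~ L j x)).
      { intros j Hj. destruct (uf_or_compl Sg p Hp (L j) (HL j)); [|auto].
        exfalso; apply (Hpl j); auto. }
      apply (uf_not_empty Sg p Hp), (uf_superset Sg p Hp _ _
        (uf_inter_list Sg p Hp C (fun j x => Sg x /\ ~ L j x) l (HpK C HC) Hcompl)); [|intros x []].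
      intros x [HCx Hall]. apply (Hx x HCx Hall).
    - intros A B [HA [C1 [l1 [HC1 Hx1]]]] [HB [C2 [l2 [HC2 Hx2]]]].
      split; [intros x [Hx _]; auto|]. exists (fun x => C1 x /\ C2 x), (l1 ++ l2).
      split; [apply KI; auto|]. intros x [Hc1 Hc2] Hall.
      split; [apply Hx1|apply Hx2]; auto; intros j Hj; apply Hall, in_or_app; auto.
    - intros A B [HA [C [l [HC Hx]]]] HAB HBS. split; [auto|].
      exists C, l. split; [auto|]. intros x Hc Hall. apply HAB; auto. }
  destruct (ultrafilter_extends Sg G HG) as [q [Hq HGq]].
  exists q. split; [split; [auto|]|].
  - intros C HC. apply HGq. split; [apply KS; auto|]. exists C, []. split; auto.
  - intros j Hqj. apply (uf_not_compl Sg q Hq (L j) Hqj), HGq.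
    split; [intros x []; auto|]. exists Sg, [j]. split; [auto|].
    intros x _ Hall. apply Hall; left; auto.
Qed.

Lemma Kbar_compact Sg K : filter_on Sg K -> bS_compact Sg (Kbar Sg K).
Proof.
  intros HK I U HUo Hcov. apply NNPP; intros Hno.
  set (J := {iA : I * (R -> Prop) |
             subsetR (snd iA) Sg /\ forall q, ultrafilter Sg q -> q (snd iA) -> U (fst iA) q}).
  destruct (ultrafilter_avoiding Sg K (fun j : J => snd (proj1_sig j)) HK) as [q [Hq Hav]].
  - intros j. apply (proj2_sig j).
  - intros l. apply NNPP; intros Hc. apply Hno. exists (map (fun j : J => fst (proj1_sig j)) l).
    intros p Hp. apply NNPP; intros Hc2. apply Hc. exists p. split; [auto|]. intros j Hj Hpj.
    apply Hc2. exists (fst (proj1_sig j)).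
    split; [apply (in_map (fun j : J => fst (proj1_sig j))); auto|].
    apply (proj2_sig j); [apply Hp|auto].
  - destruct (Hcov q Hq) as [i Hi]. destruct (HUo i q Hi) as [A [HqA Hb]].
    apply (Hav (exist _ (i, A) (conj (uf_subset _ _ (proj1 Hq) A HqA) Hb))). exact HqA.
Qed.

Lemma bS_compact_ext Sg (X Y : ((R -> Prop) -> Prop) -> Prop) :
  (forall p, X p <-> Y p) -> bS_compact Sg X -> bS_compact Sg Y.
Proof.
  intros HXY HX I U HU Hcov. destruct (HX I U HU) as [l Hl].
  - intros p Hp. apply Hcov, HXY; auto.
  - exists l. intros p Hp. apply Hl, HXY; auto.
Qed.

Theorem lemma4p6 (S : R -> Prop) (HS : dense_subsemigroup S) :
  filter_on S (Kfam S) /\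
  (forall p, J0 S p <-> Kbar S (Kfam S) p) /\
  bS_compact S (J0 S) /\ bS_subsemigroup S (J0 S).
Proof.
  assert (HK : filter_on S (Kfam S)) by (apply Kfam_filter; auto).
  assert (HJ0 : forall p, J0 S p <-> Kbar S (Kfam S) p) by (intros p; apply J0_iff_Kbar; auto).
  split; [auto|]. split; [auto|]. split.
  - apply (bS_compact_ext S (Kbar S (Kfam S))); [intros p; symmetry; auto|].
    apply Kbar_compact; auto.
  - split; [intros p [[Hu _] _]; auto|]. split.
    + destruct (ultrafilter_extends S (Kfam S) HK) as [p [Hp HKp]].
      exists p. apply HJ0. split; auto.
    + intros p q Hp Hq. apply ult_add_J0; auto. apply HS.
Qed.
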